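(* Let $n\ge 2$, $M_1\in\mathbb N^+$, $\gamma$ Euler's constant, and $M=\lceil e(\log(n-1)+\gamma)\rceil+M_1$. Then $$\sum_{m=M+1}^{n}\frac{s_u(n,m)}{n!}\le\exp(-M_1),$$ i.e. the probability $P(s_u(n,m>M))$ that a uniformly random permutation of $\{1,\dots,n\}$ has more than $M$ cycles is at most $\exp(-M_1)$.
   Context: $s_u(n,m)$ denotes the unsigned Stirling number of the first kind (the number of permutations of $\{1,\dots,n\}$ with exactly $m$ cycles), and $P(s_u(n,m))=s_u(n,m)/n!$. $\log$ is the natural logarithm. *)

From HB Require Import structures.
From mathcomp Require Import all_boot all_order all_algebra all_fingroup.
From mathcomp Require Import all_classical all_reals all_analysis.
Set Implicit Arguments. Unset Strict Implicit. Unset Printing Implicit Defensive.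
Import Order.TTheory GRing.Theory Num.Theory.
Local Open Scope classical_set_scope.
Local Open Scope ring_scope.

(* unsigned Stirling number of the first kind: number of permutations of
   {0,...,n-1} with exactly m cycles (fixed points count as cycles) *)
Definition stirling1u (n m : nat) : nat :=
  #|[set s : {perm 'I_n} | #|porbits s| == m]|.

Definition euler_gamma (R : realType) : R :=
  lim ((fun k : nat => \sum_(1 <= i < k.+1) (i%:R)^-1 - ln (k%:R : R)) @ \oo).

From HB Require Import structures.
From mathcomp Require Import all_boot all_order all_algebra all_fingroup.
From mathcomp Require Import all_classical all_reals all_analysis.
From mathcomp Require Import zify ring lra.
Set Implicit Arguments. Unset Strict Implicit. Unset Printing Implicit Defensive.
Import Order.TTheory GRing.Theory Num.Theory.
Local Open Scope ring_scope.

(* Chernoff bound with base e: if C is the number of cycles of a uniform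
   random permutation of n points, then P(C > M) <= e^-(M+1) E[e^C], and
   E[x^C] = x(x+1)...(x+n-1)/n! is the generating function of the s_u(n,m).
   Writing (e+i)/(i+1) = 1 + (e-1)/(i+1) <= exp((e-1)/(i+1)) bounds E[e^C] by
   exp(1 + (e-1)(H_n - 1)), and since H_k - ln(k+1) increases to gamma,
   (e-1)(H_n - 1) <= e (ln(n-1) + gamma) <= M - M1 as soon as n >= 3.
   For n = 2 the sum is empty. *)

Section CycleCount.
Variable T : finType.

Definition ncycles (s : {perm T}) : nat := #|porbits s|.

Lemma ncycles1 : ncycles 1 = #|T|.
Proof.
rewrite /ncycles /porbits card_imset // => x y /eqP; rewrite eq_porbit_mem.
by rewrite porbit.unlock cycle1 imset_set1 /aperm perm1 inE => /eqP.
Qed.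

Lemma ncycles_tpermM (u : {perm T}) a j : u a = a ->
  (ncycles (tperm a j * u)%g + (a != j) = ncycles u)%N.
Proof.
move=> ua; have := porbits_mul_tperm u a j; rewrite /ncycles.
have -> : (a \in porbit u j) = (a == j).
  rewrite porbit_sym; apply/porbitP/eqP => [[i ->]|<-]; first by rewrite permX_fix.
  by exists 0%N; rewrite expg0 perm1.
by case: eqP => [->|_] /=; lia.
Qed.

Lemma perm_onD1 (A : {set T}) a (u : {perm T}) :
  perm_on (A :\ a) u = perm_on A u && (u a == a).
Proof.
apply/idP/andP => [h|[h /eqP ua]].
  split; first exact: fintype.subset_trans h (subsetDl _ _).
  by apply/eqP; apply: out_perm h _; rewrite !inE eqxx.
apply/fintype.subsetP => x; rewrite inE => hx; rewrite !inE.
have -> : x != a by apply: contraNneq hx => ->; rewrite ua.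
exact: (fintype.subsetP h).
Qed.

Lemma perm_on_tpermM (A : {set T}) a j (u : {perm T}) : a \in A -> j \in A ->
  perm_on A (tperm a j * u)%g = perm_on A u.
Proof.
move=> aA jA; have tA : perm_on A (tperm a j).
  apply: fintype.subset_trans (tperm_on a j) _.
  by apply/fintype.subsetP => z; rewrite !inE => /orP[]/eqP->.
by apply/idP/idP => h; [rewrite -(tpermKg a j u) |]; apply: perm_onM.
Qed.

Variables (R : comPzRingType) (x : R).

Definition perm_on_gf (A : {set T}) : R := \sum_(s | perm_on A s) x ^+ ncycles s.

(* Sort the permutations s on A by j = s^-1 a; then tperm a j * s fixes a. *)
Lemma perm_on_gf_split (A : {set T}) a : a \in A ->
  perm_on_gf A =
    \sum_(j in A) \sum_(u | perm_on (A :\ a) u) x ^+ ncycles (tperm a j * u)%g.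
Proof.
move=> aA; rewrite /perm_on_gf.
transitivity (\sum_(s | perm_on A s) \sum_(j in A | (s^-1)%g a == j) x ^+ ncycles s).
  apply: eq_bigr => s hs; rewrite (big_pred1 ((s^-1)%g a)) // => j /=.
  by rewrite andb_idl // => /eqP <-; rewrite perm_closed ?perm_onV.
rewrite (exchange_big_dep (mem A)) /=; last by move=> s j _ /andP[].
apply: eq_bigr => j jA.
rewrite (reindex_onto (fun u => (tperm a j * u)%g) (fun s => (tperm a j * s)%g));
  last by move=> s _; rewrite tpermKg.
apply: eq_bigl => u; rewrite tpermKg eqxx andbT perm_onD1 perm_on_tpermM //.
rewrite invMg permM tpermV jA /=; congr (_ && _).
rewrite -[X in _ == X](tpermL a j) (inj_eq perm_inj).
by rewrite -(inj_eq (@perm_inj _ u)) permKV eq_sym.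
Qed.

Lemma perm_on_gf_step (A : {set T}) a : a \in A ->
  x * perm_on_gf A = (x + (#|A|.-1)%:R) * perm_on_gf (A :\ a).
Proof.
move=> aA; rewrite (perm_on_gf_split aA) mulr_sumr (bigD1 a) //= tperm1.
under eq_bigr do rewrite mul1g.
rewrite -/(perm_on_gf _) mulrDl; congr (_ + _).
have -> : #|A|.-1 = #|[pred j in A | j != a]|.
  by rewrite (cardsD1 a) aA; apply: eq_card => j; rewrite !inE andbC.
rewrite -sumr_const mulr_suml; apply: eq_bigr => j /andP[_ ja].
rewrite mul1r mulr_sumr; apply: eq_bigr => u; rewrite perm_onD1 => /andP[_ /eqP ua].
by rewrite -(ncycles_tpermM j ua) eq_sym ja addn1 exprS.
Qed.

(* The factor x ^+ #|A| stands for the #|T| - #|A| fixed points outside A. *)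
Lemma perm_on_gf_closed (A : {set T}) :
  x ^+ #|A| * perm_on_gf A = x ^+ #|T| * \prod_(i < #|A|) (x + i%:R).
Proof.
move cardA: #|A| => k; elim: k A cardA => [|k IHk] A cardA.
  rewrite big_ord0 mulr1 expr0 mul1r /perm_on_gf (big_pred1 1%g) ?ncycles1 // => s /=.
  apply/idP/eqP => [sA|->]; last exact: perm_on1.
  by apply: perm_on_id sA _; rewrite cardA.
have /set0Pn [a aA] : A != finset.set0 by rewrite -card_gt0 cardA.
have cardAa : #|A :\ a| = k by move: cardA; rewrite (cardsD1 a) aA add1n => -[].
rewrite exprSr -mulrA (perm_on_gf_step aA) cardA mulrCA.
rewrite (IHk _ cardAa) big_ord_recr /=; ring.
Qed.

End CycleCount.

Lemma perm_on_gfT (R : comPzRingType) n (x : R) :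
  perm_on_gf x [set: 'I_n] = \sum_(m < n.+1) (stirling1u n m)%:R * x ^+ m.
Proof.
have ncycles_lt (s : {perm 'I_n}) : (ncycles s < n.+1)%N.
  by rewrite ltnS /ncycles /porbits (leq_trans (leq_imset_card _ _)) // card_ord.
rewrite /perm_on_gf (eq_bigl xpredT) => [|s]; last first.
  by apply/fintype.subsetP => y; rewrite finset.in_setT.
transitivity (\sum_(s : {perm 'I_n}) \sum_(m < n.+1 | ncycles s == m) x ^+ m).
  by apply: eq_bigr => s _; rewrite (big_pred1 (Ordinal (ncycles_lt s))).
rewrite (exchange_big_dep xpredT) //=; apply: eq_bigr => m _.
rewrite sumr_const mulr_natl /stirling1u; congr (_ *+ _).
by apply: eq_card => s; apply/idP/idP; rewrite in_setE.
Qed.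

(* x ^+ n is cancelled in {poly R}, where 'X^n is monic, hence regular. *)
Lemma stirling1u_gf (R : comNzRingType) n (x : R) :
  \sum_(m < n.+1) (stirling1u n m)%:R * x ^+ m = \prod_(i < n) (x + i%:R).
Proof.
have gfX : \sum_(m < n.+1) (stirling1u n m)%:R * 'X^m
    = \prod_(i < n) ('X + i%:R) :> {poly R}.
  apply: (monic_lreg (monicXn R n)); rewrite -perm_on_gfT.
  by have := perm_on_gf_closed 'X [set: 'I_n]; rewrite cardsT card_ord => ->.
have := congr1 (horner^~ x) gfX; rewrite horner_sum horner_prod => gfx.
rewrite (eq_bigr (fun m : 'I_n.+1 => ((stirling1u n m)%:R * 'X^m).[x])) => [|m _].
  by rewrite gfx; apply: eq_bigr => i _; rewrite hornerD hornerX -polyC_natr hornerC.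
by rewrite hornerM -polyC_natr hornerC hornerXn.
Qed.

Section EulerGamma.
Variable R : realType.

Definition harmonic_number (k : nat) : R := \sum_(1 <= i < k.+1) i%:R^-1.

Lemma harmonic_number0 : harmonic_number 0 = 0.
Proof. by rewrite /harmonic_number big_geq. Qed.

Lemma harmonic_numberS k :
  harmonic_number k.+1 = harmonic_number k + k.+1%:R^-1.
Proof. by rewrite /harmonic_number big_nat_recr. Qed.

Lemma harmonic_number_ge1 k : (0 < k)%N -> 1 <= harmonic_number k.
Proof.
case: k => // k _; elim: k => [|k IHk].
  by rewrite harmonic_numberS harmonic_number0 add0r invr1.
by rewrite harmonic_numberS (le_trans IHk) // lerDl invr_ge0.
Qed.

Lemma ln_le_tangent (a d : R) : 0 < a -> - a < d -> ln (a + d) <= ln a + d / a.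
Proof.
move=> a_gt0 da; have da_gt : -1 < d / a by rewrite ltr_pdivlMr // mulN1r.
have -> : a + d = a * (1 + d / a) by rewrite mulrDr mulr1 mulrCA divff ?mulr1 ?gt_eqF.
by rewrite lnM ?posrE ?lerD2l ?le_ln1Dx //; lra.
Qed.

(* euler_gamma R is the limit of gamma_seq, which gamma_lower approaches from
   below. *)
Let gamma_seq k := harmonic_number k - ln k%:R.
Let gamma_lower k := harmonic_number k - ln k.+1%:R.

Lemma gamma_lower_nondecreasing : nondecreasing_seq gamma_lower.
Proof.
apply/nondecreasing_seqP => k; rewrite /gamma_lower harmonic_numberS.
have : ln k.+2%:R <= ln k.+1%:R + k.+1%:R^-1 :> R.
  have := @ln_le_tangent k.+1%:R 1 (ltr0Sn _ _); rewrite natr1 mul1r; apply.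
  by rewrite (lt_trans _ ltr01) // oppr_lt0.
by move: (k.+1%:R^-1 : R) => q; lra.
Qed.

Lemma gamma_seq_nonincreasing k m : (0 < k <= m)%N -> gamma_seq m <= gamma_seq k.
Proof.
suff ni : nonincreasing_seq (fun j => gamma_seq j.+1).
  by case: k m => [|k] [|m] //= km; apply: ni.
apply/nonincreasing_seqP => {}k; rewrite /gamma_seq harmonic_numberS.
have : ln k.+1%:R <= ln k.+2%:R - k.+2%:R^-1 :> R.
  have := @ln_le_tangent k.+2%:R (-1) (ltr0Sn _ _); rewrite ltrN2 ltr1n => /(_ isT).
  by rewrite -natr1 addrK mulN1r.
by move: (k.+2%:R^-1 : R) => q; lra.
Qed.

Lemma gamma_lower_le_seq k : gamma_lower k <= gamma_seq k.
Proof.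
rewrite lerD2l lerN2; case: k => [|k]; first by rewrite ln0 // ln1.
by rewrite ler_ln ?posrE // ler_nat.
Qed.

Lemma euler_gamma_ge k : harmonic_number k - ln k.+1%:R <= euler_gamma R.
Proof.
have gamma_seq_cvg : cvgn gamma_seq.
  apply: (@near_nonincreasing_is_cvgn _ _ 0).
    by exists 1%N => // j j_gt0 m jm; apply: gamma_seq_nonincreasing; rewrite j_gt0.
  apply: nearW => j; apply: le_trans (gamma_lower_le_seq j).
  have := gamma_lower_nondecreasing (leq0n j).
  by rewrite /gamma_lower harmonic_number0 ln1 subr0.
apply: limr_ge => //; exists k => // j /= kj.
exact: le_trans (gamma_lower_nondecreasing kj) (gamma_lower_le_seq j).
Qed.

Lemma euler_gamma_gt0 : 0 < euler_gamma R.
Proof.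
apply: lt_le_trans (euler_gamma_ge 1).
rewrite harmonic_numberS harmonic_number0 add0r invr1 subr_gt0.
rewrite -[X in _ < X](expRK 1) ltr_ln ?posrE ?expR_gt0 //.
by have := expR_gt1Dx (oner_neq0 R).
Qed.

End EulerGamma.

Lemma harmonic_number_le_ln_euler_gamma (R : realType) (x : R) p :
    1 <= x -> (2 <= p)%N ->
  (x - 1) * (harmonic_number R p.+1 - 1) <= x * (ln p%:R + euler_gamma R).
Proof.
move=> x_ge1 p_ge2; have p_gt0 : (0 : R) < p%:R by rewrite ltr0n; lia.
have ln_pS : ln p.+1%:R <= ln p%:R + p%:R^-1 :> R.
  have := @ln_le_tangent R p%:R 1 p_gt0; rewrite natr1 mul1r; apply.
  by rewrite (lt_trans _ ltr01) // oppr_lt0.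
have H_ge1 : 1 <= harmonic_number R p by apply: harmonic_number_ge1; lia.
have inv_p : p%:R^-1 <= 2^-1 :> R by rewrite lef_pV2 ?posrE // ler_nat.
have inv_pS : p.+1%:R^-1 <= 3^-1 :> R by rewrite lef_pV2 ?posrE // ler_nat.
have gamma_lb : harmonic_number R p - p%:R^-1 <= ln p%:R + euler_gamma R.
  by have := euler_gamma_ge R p; move: (p%:R^-1 : R) ln_pS => d; lra.
have x_ge0 : 0 <= x by apply: le_trans x_ge1.
have x1_ge0 : 0 <= x - 1 by rewrite subr_ge0.
have := ler_wpM2l x1_ge0 inv_pS; have := ler_wpM2l x_ge0 inv_p.
have := ler_wpM2l x_ge0 gamma_lb; rewrite harmonic_numberS.
move: (harmonic_number R p) (ln p%:R + euler_gamma R) H_ge1 => H L.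
by move: (p%:R^-1 : R) (p.+1%:R^-1 : R) => d q; lra.
Qed.

Lemma rising_factorial_le_expR (R : realType) (x : R) n : 0 <= x ->
  \prod_(i < n.+1) (x + i%:R) / n.+1`!%:R
    <= x * expR ((x - 1) * (harmonic_number R n.+1 - 1)).
Proof.
move=> x_ge0; elim: n => [|n IHn].
  rewrite big_ord1 harmonic_numberS harmonic_number0 add0r invr1 subrr mulr0.
  by rewrite expR0 /= addr0.
rewrite big_ord_recr /= factS natrM harmonic_numberS.
have nS : n.+2%:R = n.+1%:R + 1 :> R by rewrite natr1.
have step : (x + n.+1%:R) / n.+2%:R <= expR ((x - 1) * n.+2%:R^-1).
  apply: le_trans (expR_ge1Dx _); rewrite le_eqVlt; apply/orP; left; apply/eqP.
  by rewrite nS; field; apply: lt0r_neq0; have := ler0n R n; lra.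
have -> : (x - 1) * (harmonic_number R n.+1 + n.+2%:R^-1 - 1)
    = (x - 1) * (harmonic_number R n.+1 - 1) + (x - 1) * n.+2%:R^-1 by ring.
rewrite expRD mulrA invfM [n.+2%:R^-1 * _]mulrC mulrACA; apply: ler_pM => //.
- by apply: divr_ge0 => //; apply: prodr_ge0 => i _; apply: addr_ge0.
- by apply: divr_ge0 => //; apply: addr_ge0.
Qed.

Lemma chernoff_sum (R : realType) (I : finType) (P : pred I) (w c : I -> R) (t : R) :
    (forall i, 0 <= w i) -> (forall i, P i -> t <= c i) ->
  \sum_(i | P i) w i <= expR (- t) * \sum_i w i * expR (c i).
Proof.
move=> w_ge0 Pt; rewrite mulr_sumr [X in _ <= X](bigID P) /= -[X in X <= _]addr0.
apply: lerD; last by apply: sumr_ge0 => i _; rewrite mulr_ge0 ?mulr_ge0 ?expR_ge0.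
apply: ler_sum => i Pi; rewrite mulrCA -expRD ler_peMr //.
by rewrite -expR0 ler_expR addrC subr_ge0 Pt.
Qed.

Theorem lemma5p2 (R : realType) (n M1 : nat) (hn : (2 <= n)%N) (hM1 : (0 < M1)%N) :
  let M : int := Num.ceil (expR 1 * (ln ((n.-1)%:R : R) + euler_gamma R)) + M1%:Z in
  \sum_(m < n.+1 | M < (m : nat)%:Z) ((stirling1u n m)%:R / (n`!)%:R : R)
    <= expR (- (M1%:R : R)).
Proof.
case: n hn => [//|p] p_gt0; cbv zeta.
set M := Num.ceil _ + _.
have M_ge : expR 1 * (ln p%:R + euler_gamma R) + M1%:R <= M%:~R.
  by rewrite /M rmorphD /= lerD2r ceil_ge.
have [p1 | p_neq1] := eqVneq p 1%N.
  have M_gt1 : 1 < M.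
    rewrite -(ltr_int R); apply: lt_le_trans M_ge; rewrite p1 ln1 add0r.
    have := mulr_gt0 (expR_gt0 1) (euler_gamma_gt0 R).
    by have := ler1n R M1; rewrite hM1; lra.
  rewrite big_pred0 ?expR_ge0 // => m.
  by move: M_gt1 (ltn_ord m) p1; clearbody M; lia.
have {p_gt0 p_neq1} p_ge2 : (2 <= p)%N by lia.
have moment : \sum_(m < p.+2) (stirling1u p.+1 m)%:R / p.+1`!%:R * expR m%:R
    = \prod_(i < p.+1) (expR 1 + i%:R) / p.+1`!%:R :> R.
  rewrite -stirling1u_gf mulr_suml; apply: eq_bigr => m _.
  by rewrite -[m%:R]mulr1 expRM_natl mulrAC.
apply: le_trans
  (chernoff_sum (t := (M + 1)%:~R) (c := fun m : 'I_p.+2 => m%:R) _ _) _.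
- by move=> m; rewrite divr_ge0.
- by move=> m; rewrite -lezD1 -(ler_int R) rmorphD.
rewrite moment; have := rising_factorial_le_expR p (expR_ge0 1 : 0 <= expR 1 :> R).
move/(ler_wpM2l (expR_ge0 (- (M + 1)%:~R))) /le_trans; apply.
rewrite mulrA -!expRD ler_expR rmorphD /=.
have e_ge1 : 1 <= expR 1 :> R by rewrite -expR0 ler_expR.
have := harmonic_number_le_ln_euler_gamma e_ge1 p_ge2.
by move: M_ge; move: (harmonic_number R p.+2) (ln p%:R + euler_gamma R) => *; lra.
Qed.
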